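(* For every type $A$, the following are equivalent: (1) $A$ is discrete; (2) for every $a_0:A$, the map $\Sigma\text{-isolate}_{A,\,a_0=(-)}:\sum_{a:A^{\circ}}(a_0=a)^{\circ}\to\big(\sum_{a:A}a_0=a\big)^{\circ}$ is an equivalence.
   Context: Homotopy Type Theory. A type is discrete if it has decidable equality. A point $a:A$ is isolated if $\prod_{b:A}\mathrm{Dec}(a=b)$; $A^{\circ}$ is the subtype of isolated points. For $B:A\to\mathsf{Type}$, $\Sigma\text{-isolate}_{A,B}:\sum_{a:A^{\circ}}B(a)^{\circ}\to(\sum_{a:A}B(a))^{\circ}$ sends $(a_0,b_0)$ to $(a_0,b_0)$ (a pair of isolated points is isolated). *)

Definition Dec (P : Type) : Type := P + (P -> False).

Definition is_isolated {A : Type} (a : A) : Type := forall b : A, Dec (a = b).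

Definition Isolated (A : Type) : Type := { a : A & is_isolated a }.

Definition discrete (A : Type) : Type := forall a b : A, Dec (a = b).

(* Equivalence: bi-invertible map (a proposition under funext). *)
Definition isequiv {X Y : Type} (f : X -> Y) : Type :=
  ({ g : Y -> X & forall y, f (g y) = y } * { h : Y -> X & forall x, h (f x) = x })%type.

(* Local Hedberg: paths out of an isolated point form propositions. *)
Section Hedberg.
Context {A : Type} (a : A) (d : is_isolated a).

Definition collapse (b : A) (p : a = b) : a = b :=
  match d b with
  | inl q => q
  | inr n => match n p with end
  end.

Lemma collapse_const (b : A) (p q : a = b) : collapse b p = collapse b q.
Proof.
  unfold collapse. destruct (d b) as [r|n]; [reflexivity| destruct (n p)].
Defined.

Lemma path_collapse (b : A) (p : a = b) :
  p = eq_trans (eq_sym (collapse a eq_refl)) (collapse b p).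
Proof.
  destruct p. destruct (collapse a eq_refl). reflexivity.
Defined.

Lemma isolated_paths_prop (b : A) (p q : a = b) : p = q.
Proof.
  rewrite (path_collapse b p), (path_collapse b q), (collapse_const b p q).
  reflexivity.
Defined.
End Hedberg.

Lemma pair_isolated {A : Type} (B : A -> Type) (a0 : A) (b0 : B a0) :
  is_isolated a0 -> is_isolated b0 ->
  is_isolated (existT B a0 b0).
Proof.
  intros da db [a b].
  destruct (da a) as [p|n].
  - destruct p.
    destruct (db b) as [q|m].
    + left. exact (f_equal (existT B a0) q).
    + right. intro e.
      (* second component: transport along the first-component path *)
      assert (H : forall s t : {x : A & B x} , forall e : s = t,
                 eq_rect (projT1 s) B (projT2 s) (projT1 t)
                   (f_equal (@projT1 A B) e) = projT2 t)
        by (intros s t e'; destruct e'; reflexivity).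
      specialize (H _ _ e). simpl in H.
      rewrite (isolated_paths_prop a0 da a0 (f_equal (@projT1 A B) e) eq_refl) in H.
      exact (m H).
  - right. intro e. exact (n (f_equal (@projT1 A B) e)).
Defined.

Definition Sigma_isolate {A : Type} (B : A -> Type) :
  { a : Isolated A & Isolated (B (projT1 a)) } -> Isolated { a : A & B a } :=
  fun x =>
    match x with
    | existT _ (existT _ a0 da) (existT _ b0 db) =>
        existT _ (existT B a0 b0) (pair_isolated B a0 b0 da db)
    end.

(* If A is discrete, every point of A and every path a0 = a is isolated, and
   being isolated is a proposition; so inverting Σ-isolate just means
   re-attaching the (unique) isolatedness witnesses.  Conversely, the centre
   (a0, refl) of the contractible based path space is isolated, and any map
   back along Σ-isolate sends it to an isolated a with a0 = a, so a0 is
   isolated. *)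

From Stdlib Require Import FunctionalExtensionality.

Definition is_prop (P : Type) : Type := forall x y : P, x = y.

Lemma isolated_of_prop {X : Type} : is_prop X -> forall x : X, is_isolated x.
Proof. intros hX x y. left. apply hX. Qed.

Lemma discrete_of_prop {X : Type} : is_prop X -> discrete X.
Proof. exact isolated_of_prop. Qed.

Lemma discrete_paths_from_isolated {A : Type} (a0 a : A) :
  is_isolated a0 -> discrete (a0 = a).
Proof. intro d. exact (discrete_of_prop (isolated_paths_prop a0 d a)). Qed.

Lemma based_paths_prop {A : Type} (a0 : A) : is_prop {a : A & a0 = a}.
Proof. intros [a p] [b q]. destruct p, q. reflexivity. Qed.

Lemma Dec_prop {P : Type} : is_prop P -> is_prop (Dec P).
Proof.
  intros hP [x|n] [y|m].
  - f_equal. apply hP.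
  - destruct (m x).
  - destruct (n y).
  - f_equal. apply functional_extensionality. intro x. destruct (n x).
Qed.

Lemma is_isolated_prop {A : Type} (a : A) : is_prop (is_isolated a).
Proof.
  intros d1 d2. apply functional_extensionality_dep. intro b.
  exact (Dec_prop (isolated_paths_prop a d1 b) _ _).
Qed.

Lemma isequiv_of_inverse {X Y : Type} (f : X -> Y) (g : Y -> X) :
  (forall y, f (g y) = y) -> (forall x, g (f x) = x) -> isequiv f.
Proof. intros fg gf. exact (existT _ g fg, existT _ g gf). Qed.

Section SigmaIsolateDiscrete.
Context {A : Type} (B : A -> Type) (dA : discrete A)
  (dB : forall a, discrete (B a)).

Definition Sigma_isolate_inv (y : Isolated {a : A & B a}) :
  {x : Isolated A & Isolated (B (projT1 x))} :=
  let (ab, _) := y in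
  let (a, b) := ab in
  existT _ (existT _ a (dA a)) (existT _ b (dB a b)).

Lemma Sigma_isolate_discrete_isequiv : isequiv (Sigma_isolate B).
Proof.
  apply (isequiv_of_inverse _ Sigma_isolate_inv).
  - intros [[a b] d]. cbn. f_equal. apply is_isolated_prop.
  - intros [[a da] [b db]]. cbn.
    rewrite (is_isolated_prop a (dA a) da), (is_isolated_prop b (dB a b) db).
    reflexivity.
Qed.

End SigmaIsolateDiscrete.

Lemma isolated_of_based_paths_map {A : Type} (a0 : A)
  (g : Isolated {a : A & a0 = a} ->
       {x : Isolated A & Isolated (a0 = projT1 x)}) :
  is_isolated a0.
Proof.
  set (c := existT _ (existT (fun a => a0 = a) a0 eq_refl)
              (isolated_of_prop (based_paths_prop a0) _)).
  destruct (g c) as [[a da] [p _]]. cbn in p.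
  destruct p. exact da.
Qed.

Theorem proposition2p16 (A : Type) :
  (discrete A -> forall a0 : A, isequiv (Sigma_isolate (fun a : A => a0 = a))) *
  ((forall a0 : A, isequiv (Sigma_isolate (fun a : A => a0 = a))) -> discrete A).
Proof.
  split.
  - intros dA a0.
    apply (Sigma_isolate_discrete_isequiv _ dA).
    intro a. exact (discrete_paths_from_isolated a0 a (dA a0)).
  - intros H a0.
    destruct (H a0) as [[g _] _].
    exact (isolated_of_based_paths_map a0 g).
Qed.
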